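(* Let $S\in\mathbb{R}^{n\times n}$ be real symmetric, $D\in\mathbb{R}^{r\times r}$ diagonal, and $X\in\mathbb{R}^{n\times r}$ satisfy $(S-XX^{T})X=XD$. Then there exists $Y\in\mathbb{R}^{n\times r}$ with $Y^{T}Y$ diagonal such that $(S-YY^{T})Y=YD$, $YY^{T}=XX^{T}$, and $\langle D,Y^{T}Y\rangle=\langle D,X^{T}X\rangle$.
   Context: $\langle A,B\rangle=\mathrm{tr}(A^{T}B)$. *)

From HB Require Import structures.
From mathcomp Require Import all_boot all_order all_algebra.
From mathcomp Require Import reals.
Set Implicit Arguments. Unset Strict Implicit. Unset Printing Implicit Defensive.
Import GRing.Theory Num.Theory.
Local Open Scope ring_scope.

Definition frob (R : pzRingType) (m n : nat) (A B : 'M[R]_(m, n)) : R :=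
  \tr (A^T *m B).

From HB Require Import structures.
From mathcomp Require Import all_boot all_order all_algebra.
From mathcomp Require Import fingroup perm.
From mathcomp Require Import reals complex.
From mathcomp Require Import ring lra.
Set Implicit Arguments. Unset Strict Implicit. Unset Printing Implicit Defensive.
Import Order.TTheory GRing.Theory Num.Theory.
Local Open Scope ring_scope.

(* Put M = S - X X^T and G = X^T X.  Since M X = X D, the matrix X^T M X = G D
   is symmetric, so G commutes with the diagonal matrix D.  Commuting real
   symmetric matrices are simultaneously orthogonally diagonalizable: over R[i]
   they have a common eigenvector, whose real or imaginary part is a real common
   eigenvector, and a Householder reflection sending it to the first basis
   vector deflates both matrices.  Reordering the columns of such a
   diagonalizing Q turns Q^T D Q back into D itself, which gives an orthogonal W
   commuting with D with W^T G W diagonal.  Then Y = X W works: Y Y^T = X X^T,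
   (S - Y Y^T) Y = M X W = X D W = Y D, and tr (D W^T G W) = tr (W D W^T G)
   = tr (D G). *)

Lemma mul_row_trC (R : comPzRingType) n (u v : 'rV[R]_n) : u *m v^T = v *m u^T.
Proof.
by apply/rowP => j; rewrite ord1 !mxE; apply: eq_bigr => k _; rewrite !mxE mulrC.
Qed.

Section RowNorm.
Variable R : realDomainType.

Lemma dot_rowE n (u v : 'rV[R]_n) : (u *m v^T) 0 0 = \sum_k u 0 k * v 0 k.
Proof. by rewrite !mxE; apply: eq_bigr => k _; rewrite mxE. Qed.

Lemma dot_row_ge0 n (v : 'rV[R]_n) : 0 <= (v *m v^T) 0 0.
Proof. by rewrite dot_rowE sumr_ge0 // => k _; rewrite -expr2 sqr_ge0. Qed.

Lemma dot_row_eq0 n (v : 'rV[R]_n) : ((v *m v^T) 0 0 == 0) = (v == 0).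
Proof.
apply/eqP/eqP => [|->]; last by rewrite mul0mx mxE.
rewrite dot_rowE => /psumr_eq0P v0; apply/rowP => j; rewrite mxE.
have /(_ j isT)/eqP := v0 (fun k _ => sqr_ge0 (v 0 k)).
by rewrite mulf_eq0 orbb => /eqP.
Qed.

End RowNorm.

Section ComplexParts.
Variable R : rcfType.
Local Notation Re := (@complex.Re R).
Local Notation Im := (@complex.Im R).
Local Notation realmx := (map_mx (real_complex R)).

Lemma Re_sum (I : Type) (r : seq I) (F : I -> R[i]) :
  Re (\sum_(i <- r) F i) = \sum_(i <- r) Re (F i).
Proof. exact: (@raddf_sum _ _ (Re : Rcomplex R -> R)). Qed.

Lemma Im_sum (I : Type) (r : seq I) (F : I -> R[i]) :
  Im (\sum_(i <- r) F i) = \sum_(i <- r) Im (F i).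
Proof. exact: (@raddf_sum _ _ (Im : Rcomplex R -> R)). Qed.

Lemma map_Re_mulmx_real m n p (A : 'M[R[i]]_(m, n)) (M : 'M[R]_(n, p)) :
  map_mx Re (A *m realmx M) = map_mx Re A *m M.
Proof.
apply/matrixP => i j; rewrite !mxE Re_sum; apply: eq_bigr => k _.
by rewrite !mxE; case: (A i k) => a b /=; rewrite mulr0 subr0.
Qed.

Lemma map_Im_mulmx_real m n p (A : 'M[R[i]]_(m, n)) (M : 'M[R]_(n, p)) :
  map_mx Im (A *m realmx M) = map_mx Im A *m M.
Proof.
apply/matrixP => i j; rewrite !mxE Im_sum; apply: eq_bigr => k _.
by rewrite !mxE; case: (A i k) => a b /=; rewrite mulr0 add0r.
Qed.

Lemma map_Re_scale m n (l : R[i]) (A : 'M[R[i]]_(m, n)) :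
  map_mx Re (l *: A) = Re l *: map_mx Re A - Im l *: map_mx Im A.
Proof. by apply/matrixP => i j; rewrite !mxE; case: l; case: (A i j). Qed.

Lemma map_Im_scale m n (l : R[i]) (A : 'M[R[i]]_(m, n)) :
  map_mx Im (l *: A) = Re l *: map_mx Im A + Im l *: map_mx Re A.
Proof.
apply/matrixP => i j; rewrite !mxE.
by case: l; case: (A i j) => /= *; rewrite addrC.
Qed.

Lemma complex_mx_eq0 m n (A : 'M[R[i]]_(m, n)) :
  (A == 0) = (map_mx Re A == 0) && (map_mx Im A == 0).
Proof.
apply/eqP/andP => [-> | [/eqP/matrixP ReA /eqP/matrixP ImA]].
  by split; apply/eqP/matrixP => i j; rewrite !mxE.
apply/matrixP => i j; move: (ReA i j) (ImA i j); rewrite !mxE.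
by case: (A i j) => a b /= -> ->.
Qed.

Lemma symmetric_eigenvalue_real n (M : 'M[R]_n) (w : 'rV[R[i]]_n) (l : R[i]) :
  M^T = M -> w != 0 -> w *m realmx M = l *: w -> Im l = 0.
Proof.
move=> MT w0 wM; set u := map_mx Re w; set v := map_mx Im w.
have uM : u *m M = Re l *: u - Im l *: v.
  by rewrite -map_Re_mulmx_real wM map_Re_scale.
have vM : v *m M = Re l *: v + Im l *: u.
  by rewrite -map_Im_mulmx_real wM map_Im_scale.
have uMv : u *m M *m v^T = v *m M *m u^T.
  by rewrite (mul_row_trC (v *m M)) trmx_mul MT mulmxA.
have : Im l * ((u *m u^T) 0 0 + (v *m v^T) 0 0) = 0.
  move: uMv; rewrite uM vM mulmxBl mulmxDl -!scalemxAl (mul_row_trC v u).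
  move: (u *m v^T) (u *m u^T) (v *m v^T) => uv uu vv /matrixP/(_ 0 0).
  by rewrite !mxE => ?; lra.
move/eqP; rewrite mulf_eq0 paddr_eq0 ?dot_row_ge0 // !dot_row_eq0.
by rewrite -complex_mx_eq0 (negPf w0) orbF => /eqP.
Qed.

Lemma symmetric_eigenvector_parts n (M : 'M[R]_n) (w : 'rV[R[i]]_n) (l : R[i]) :
  M^T = M -> w != 0 -> w *m realmx M = l *: w ->
  map_mx Re w *m M = Re l *: map_mx Re w /\
  map_mx Im w *m M = Re l *: map_mx Im w.
Proof.
move=> MT w0 wM; have Il0 := symmetric_eigenvalue_real MT w0 wM.
rewrite -map_Re_mulmx_real -map_Im_mulmx_real wM map_Re_scale map_Im_scale Il0.
by rewrite !scale0r subr0 addr0.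
Qed.

Lemma common_real_eigenvector n (A B : 'M[R]_n) :
  (0 < n)%N -> A^T = A -> B^T = B -> A *m B = B *m A ->
  exists2 v : 'rV[R]_n, v != 0 &
    (exists a, v *m A = a *: v) /\ (exists b, v *m B = b *: v).
Proof.
move=> n_gt0 AT BT AB.
have ABc : realmx A *m realmx B = realmx B *m realmx A by rewrite -!map_mxM AB.
have [w w0 /andP[/sub_rVP[la wA] /sub_rVP[lb wB]]] :=
  common_eigenvector2 n_gt0 ABc.
have [ReA ImA] := symmetric_eigenvector_parts AT w0 wA.
have [ReB ImB] := symmetric_eigenvector_parts BT w0 wB.
move: w0; rewrite complex_mx_eq0 negb_and => /orP[Re_neq0 | Im_neq0].
- by exists (map_mx Re w) => //; split; [exists (Re la) | exists (Re lb)].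
- by exists (map_mx Im w) => //; split; [exists (Re la) | exists (Re lb)].
Qed.

End ComplexParts.

Lemma row_normalize (R : rcfType) n (v : 'rV[R]_n) :
  v != 0 -> exists c : R, (c *: v) *m (c *: v)^T = 1%:M.
Proof.
rewrite -dot_row_eq0 => v_neq0; pose s : R := (v *m v^T) 0 0.
have s_gt0 : 0 < s by rewrite lt0r v_neq0 dot_row_ge0.
have vv : v *m v^T = s%:M by exact: mx11_scalar.
pose c : R := (Num.sqrt s)^-1; have ccs : c * c * s = 1.
  by rewrite -expr2 exprVn sqr_sqrtr ?ltW // mulVf ?lt0r_neq0.
exists c; rewrite linearZ /= -scalemxAl -scalemxAr scalerA vv scale_scalar_mx.
by rewrite ccs.
Qed.

Section Reflection.
Variables (R : realFieldType) (n : nat).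
Implicit Types u e w : 'rV[R]_n.

(* The Householder reflection along w; for w = 0 the junk value 2 / 0 = 0
   makes it the identity, so [reflmxK] needs no hypothesis. *)
Definition reflmx w : 'M[R]_n := 1%:M - (2 / (w *m w^T) 0 0) *: (w^T *m w).

Lemma reflmx_sym w : (reflmx w)^T = reflmx w.
Proof. by rewrite /reflmx linearB /= trmx1 linearZ /= trmx_mul trmxK. Qed.

Lemma reflmxK w : reflmx w *m reflmx w = 1%:M.
Proof.
set c := (w *m w^T) 0 0; set k := 2 / c.
have kkc : k ^+ 2 * c = 2 * k.
  have [c0 | c_neq0] := eqVneq c 0; first by rewrite /k c0 invr0 !(mulr0, mul0r).
  by rewrite /k; field.
have wwT : w *m w^T = c%:M by rewrite [LHS]mx11_scalar.
rewrite /reflmx -/c -/k mulmxBl !mulmxBr !mulmx1 mul1mx -!scalemxAl -!scalemxAr.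
rewrite mulmxA -(mulmxA _ w) wwT mul_mx_scalar -scalemxAl !scalerA.
have -> : k * (k * c) = k + k by rewrite mulrA -expr2 kkc mulr_natl mulr2n.
by apply/matrixP => i j; rewrite !mxE; ring.
Qed.

Lemma reflmx_swap u e : u *m u^T = e *m e^T -> e *m reflmx (u - e) = u.
Proof.
move=> uu_ee; have [<- | neq_ue] := eqVneq u e.
  by rewrite subrr /reflmx trmx0 !mul0mx scaler0 subr0 mulmx1.
set w := u - e; set c := (w *m w^T) 0 0.
have c_neq0 : c != 0 by rewrite dot_row_eq0 subr_eq0.
have ewT : e *m w^T = (- c / 2)%:M.
  rewrite [LHS]mx11_scalar; congr _%:M.
  rewrite /c /w !linearB /= !mulmxBl uu_ee (mul_row_trC u e).
  by move: (e *m u^T) (e *m e^T) => a b; rewrite !mxE; field.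
rewrite /reflmx -/c mulmxBr mulmx1 -scalemxAr mulmxA ewT mul_scalar_mx scalerA.
have -> : 2 / c * (- c / 2) = -1 by field.
by rewrite scaleN1r opprK /w addrC subrK.
Qed.

End Reflection.

Section BlockDiag.
Variables (R : pzRingType) (n : nat).

Lemma mul_block_diag (a b : R) (P Q : 'M[R]_n) :
  block_mx a%:M 0 0 P *m block_mx b%:M 0 0 Q =
  block_mx (a * b)%:M 0 0 (P *m Q) :> 'M_(1 + n).
Proof. by rewrite mulmx_block !mulmx0 !mul0mx !addr0 !add0r scalar_mxM. Qed.

Lemma tr_block_diag (a : R) (P : 'M[R]_n) :
  (block_mx a%:M 0 0 P)^T = block_mx a%:M 0 0 P^T :> 'M_(1 + n).
Proof. by rewrite tr_block_mx tr_scalar_mx !trmx0. Qed.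

Lemma conj_block_diag (a : R) (P Q : 'M[R]_n) :
  (block_mx 1%:M 0 0 Q)^T *m block_mx a%:M 0 0 P *m block_mx 1%:M 0 0 Q =
  block_mx a%:M 0 0 (Q^T *m P *m Q) :> 'M_(1 + n).
Proof. by rewrite tr_block_diag !mul_block_diag mul1r mulr1. Qed.

Lemma is_diag_block_diag (a : R) (P : 'M[R]_n) :
  is_diag_mx (block_mx a%:M 0 0 P :> 'M_(1 + n)) = is_diag_mx P.
Proof. by rewrite is_diag_block_mx // !eqxx scalar_mx_is_diag. Qed.

Lemma sym_block_row0 (K : 'M[R]_(1 + n)) (a : R) :
  K^T = K -> delta_mx 0 0 *m K = a *: (delta_mx 0 0 : 'rV_(1 + n)) ->
  K = block_mx a%:M 0 0 (drsubmx K).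
Proof.
move=> KT /rowP K0; have {}K0 j : K 0 j = a * (j == 0)%:R.
  by move: (K0 j); rewrite -rowE !mxE eqxx.
have lshift0 : lshift n (0 : 'I_1) = 0 by apply/val_inj.
have rshift_neq0 j : (rshift 1 j == 0 :> 'I_(1 + n)) = false by [].
rewrite -{1}[K]submxK; congr block_mx; apply/matrixP => i j; rewrite !ord1 !mxE.
- by rewrite lshift0 K0 eqxx mulr1.
- by rewrite lshift0 K0 rshift_neq0 mulr0.
- by rewrite -KT mxE lshift0 K0 rshift_neq0 mulr0.
Qed.

End BlockDiag.

Section SimultaneousDiagonalization.
Variable R : rcfType.

Lemma sym_comm_deflation n (A B : 'M[R]_(1 + n)) :
  A^T = A -> B^T = B -> A *m B = B *m A ->
  exists2 H : 'M[R]_(1 + n), H^T *m H = 1%:M &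
    (exists a, H^T *m A *m H = block_mx a%:M 0 0 (drsubmx (H^T *m A *m H))) /\
    (exists b, H^T *m B *m H = block_mx b%:M 0 0 (drsubmx (H^T *m B *m H))).
Proof.
move=> AT BT AB.
have [v v_neq0 [[a vA] [b vB]]] := common_real_eigenvector (ltn0Sn n) AT BT AB.
have [c uu] := row_normalize v_neq0; set u := c *: v in uu.
pose e : 'rV[R]_(1 + n) := delta_mx 0 0.
have ee : e *m e^T = 1%:M.
  by rewrite trmx_delta mul_delta_mx; apply/matrixP => i j; rewrite !ord1 !mxE.
pose H : 'M[R]_(1 + n) := reflmx (u - e).
have HT : H^T = H by exact: reflmx_sym.
have eH : e *m H = u by apply: reflmx_swap; rewrite uu ee.
have uH : u *m H = e by rewrite -eH -mulmxA reflmxK mulmx1.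
have deflate (M : 'M[R]_(1 + n)) m : M^T = M -> v *m M = m *: v ->
    H^T *m M *m H = block_mx m%:M 0 0 (drsubmx (H^T *m M *m H)).
  move=> MT vM; apply: sym_block_row0; first by rewrite !trmx_mul trmxK MT mulmxA.
  by rewrite HT !mulmxA eH -scalemxAl vM scalerA mulrC -scalerA -scalemxAl uH.
exists H; first by rewrite HT reflmxK.
by split; [exists a | exists b]; apply: deflate.
Qed.

Theorem sym_comm_codiag n (A B : 'M[R]_n) :
  A^T = A -> B^T = B -> A *m B = B *m A ->
  exists Q : 'M[R]_n, [/\ Q^T *m Q = 1%:M, is_diag_mx (Q^T *m A *m Q)
                        & is_diag_mx (Q^T *m B *m Q)].
Proof.
elim: n A B => [|n IHn] A B AT BT AB.
  by exists 1%:M; split; rewrite ?trmx1 ?mulmx1 //; apply/is_diag_mxP => -[].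
have [H HH [[a Ha] [b Hb]]] := sym_comm_deflation AT BT AB.
set A' := drsubmx _ in Ha; set B' := drsubmx _ in Hb.
have A'T : A'^T = A' by rewrite /A' trmx_drsub !trmx_mul trmxK AT mulmxA.
have B'T : B'^T = B' by rewrite /B' trmx_drsub !trmx_mul trmxK BT mulmxA.
have A'B' : A' *m B' = B' *m A'.
  have HHt : H *m H^T = 1%:M := mulmx1C HH.
  have conjAB : (H^T *m A *m H) *m (H^T *m B *m H) =
                (H^T *m B *m H) *m (H^T *m A *m H).
    by rewrite !mulmxA -!(mulmxA _ H H^T) HHt !mulmx1 -(mulmxA H^T A) AB mulmxA.
  by move: (congr1 drsubmx conjAB); rewrite Ha Hb !mul_block_diag !block_mxKdr.
have [Q' [Q'Q' dA' dB']] := IHn A' B' A'T B'T A'B'.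
pose Q1 : 'M[R]_(1 + n) := block_mx 1%:M 0 0 Q'.
have conjQ M : (H *m Q1)^T *m M *m (H *m Q1) = Q1^T *m (H^T *m M *m H) *m Q1.
  by rewrite trmx_mul !mulmxA.
exists (H *m Q1); split.
- rewrite trmx_mul mulmxA -(mulmxA Q1^T) HH mulmx1 /Q1 tr_block_diag.
  by rewrite mul_block_diag mulr1 Q'Q' -scalar_mx_block.
- by rewrite conjQ Ha conj_block_diag is_diag_block_diag.
- by rewrite conjQ Hb conj_block_diag is_diag_block_diag.
Qed.

End SimultaneousDiagonalization.

Section PermConj.
Variables (R : pzRingType) (n : nat).

Lemma perm_mx_conj (s : 'S_n) (A : 'M[R]_n) :
  (perm_mx s)^T *m A *m perm_mx s = \matrix_(i, j) A (s^-1 i)%g (s^-1 j)%g.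
Proof.
rewrite tr_perm_mx -row_permE -[s in perm_mx s]invgK -col_permE.
by apply/matrixP => i j; rewrite !mxE.
Qed.

Lemma perm_mx_trV (s : 'S_n) : perm_mx s *m (perm_mx s)^T = 1%:M :> 'M[R]_n.
Proof. by rewrite tr_perm_mx -perm_mxM mulgV perm_mx1. Qed.

Lemma is_diag_perm_mx_conj (s : 'S_n) (A : 'M[R]_n) :
  is_diag_mx A -> is_diag_mx ((perm_mx s)^T *m A *m perm_mx s).
Proof.
move=> /is_diag_mxP A_diag; rewrite perm_mx_conj; apply/is_diag_mxP => i j ij.
by rewrite mxE A_diag // (inj_eq val_inj) (inj_eq perm_inj) -(inj_eq val_inj).
Qed.

End PermConj.

Lemma det_neq0_perm_prod (R : comPzRingType) n (Q : 'M[R]_n) :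
  \det Q != 0 -> exists s : 'S_n, \prod_i Q i (s i) != 0.
Proof.
move=> detQ; have [s Qs | Q0] := pickP (fun s : 'S_n => \prod_i Q i (s i) != 0).
  by exists s.
case/eqP: detQ; rewrite /determinant big1 // => s _.
by move/negbFE/eqP: (Q0 s) => ->; rewrite mulr0.
Qed.

(* A nonzero term of the Leibniz expansion of det Q pairs each d_i with an f_j. *)
Lemma diag_mx_similar_perm (R : fieldType) n (Q : 'M[R]_n) (d f : 'rV[R]_n) :
  Q \in unitmx -> diag_mx d *m Q = Q *m diag_mx f ->
  exists s : 'S_n, forall i, d 0 i = f 0 (s i).
Proof.
rewrite unitmxE unitfE => /det_neq0_perm_prod[s Qs] /matrixP dQ; exists s => i.
have /prodf_neq0/(_ i isT) Qi := Qs.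
by move: (dQ i (s i)); rewrite mul_diag_mx mul_mx_diag !mxE mulrC => /(mulfI Qi).
Qed.

Theorem comm_diag_orthogonal_diagonalizer (R : rcfType) r (G D : 'M[R]_r) :
  G^T = G -> is_diag_mx D -> G *m D = D *m G ->
  exists W : 'M[R]_r,
    [/\ W *m W^T = 1%:M, W *m D = D *m W & is_diag_mx (W^T *m G *m W)].
Proof.
move=> GT /diag_mxP[d ->] GD.
have [Q [QQ dG /diag_mxP[f Qf]]] := sym_comm_codiag GT (tr_diag_mx d) GD.
have QQt : Q *m Q^T = 1%:M := mulmx1C QQ.
have [s ds] : exists s : 'S_r, forall i, d 0 i = f 0 (s i).
  apply: (diag_mx_similar_perm (proj2 (mulmx1_unit QQ))).
  by rewrite -Qf !mulmxA QQt mul1mx.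
pose P := perm_mx (s^-1)%g : 'M[R]_r; pose W := Q *m P.
have WWt : W *m W^T = 1%:M.
  by rewrite trmx_mul mulmxA -(mulmxA Q) perm_mx_trV mulmx1.
have conjW M : W^T *m M *m W = P^T *m (Q^T *m M *m Q) *m P.
  by rewrite trmx_mul !mulmxA.
have WdW : W^T *m diag_mx d *m W = diag_mx d.
  rewrite conjW Qf perm_mx_conj invgK; apply/matrixP => i j; rewrite !mxE ds.
  by rewrite (inj_eq perm_inj).
exists W; split => //; last by rewrite conjW is_diag_perm_mx_conj.
by rewrite -[in LHS]WdW !mulmxA WWt mul1mx.
Qed.

Theorem lemma22 (R : realType) (n r : nat)
  (S : 'M[R]_n) (D : 'M[R]_r) (X : 'M[R]_(n, r)) :
  S^T = S -> is_diag_mx D ->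
  (S - X *m X^T) *m X = X *m D ->
  exists Y : 'M[R]_(n, r),
    [/\ is_diag_mx (Y^T *m Y),
        (S - Y *m Y^T) *m Y = Y *m D,
        Y *m Y^T = X *m X^T
      & frob D (Y^T *m Y) = frob D (X^T *m X)].
Proof.
move=> ST D_diag.
set M := S - X *m X^T => MX.
have MT : M^T = M by rewrite /M linearB /= trmx_mul trmxK ST.
have DT : D^T = D by case/diag_mxP: D_diag => d ->; rewrite tr_diag_mx.
have GT : (X^T *m X)^T = X^T *m X by rewrite trmx_mul trmxK.
have GD : (X^T *m X) *m D = D *m (X^T *m X).
  have XMX : X^T *m M *m X = X^T *m X *m D by rewrite -mulmxA MX mulmxA.
  have XMX_sym : (X^T *m M *m X)^T = X^T *m M *m X.
    by rewrite !trmx_mul trmxK MT mulmxA.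
  by move: XMX_sym; rewrite XMX trmx_mul GT DT => ->.
have [W [WWt WD dG]] := comm_diag_orthogonal_diagonalizer GT D_diag GD.
have YYt : X *m W *m (X *m W)^T = X *m X^T.
  by rewrite trmx_mul mulmxA -(mulmxA X) WWt mulmx1.
exists (X *m W); split => //.
- by move: dG; rewrite trmx_mul !mulmxA.
- by rewrite YYt -/M mulmxA MX -!mulmxA WD.
- rewrite /frob DT trmx_mul !mulmxA mxtrace_mulC !mulmxA WD.
  by rewrite -(mulmxA D W) WWt mulmx1.
Qed.
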